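(* Let $G_1$ and $G_2$ be two vertex-disjoint 2-edge-colored graphs with Hamiltonian alternating cycles $C_1=x_0x_1\cdots x_{2n-1}x_0$ and $C_2=y_0y_1\cdots y_{2m-1}y_0$, respectively, and let $G\in G_1\oplus G_2$. Suppose there is no good pair in $G$ (between $C_1$ and $C_2$), and that for each $i\in\{1,2\}$ there is a vertex of $C_i$ which is non-singular with respect to $C_{3-i}$. Then there exist $r\in[0,2m-1]$ and $s\in[0,2n-1]$ such that $x_0y_ry_{r+1}y_{r+2}x_0$ and $y_0x_sx_{s+1}x_{s+2}y_0$ are alternating 4-cycles (subscripts of $x$ taken modulo $2n$, of $y$ modulo $2m$).
   Context: All graphs are simple, with edges colored red or blue. An alternating cycle is a cycle in which consecutive edges have different colors; a Hamiltonian alternating cycle of a graph is an alternating cycle through all its vertices. For vertex-disjoint 2-edge-colored graphs $G_1,G_2$, the colored generalized sum $G_1\oplus G_2$ is the set of 2-edge-colored graphs $G$ with $V(G)=V(G_1)\cup V(G_2)$, $G\langle V(G_i)\rangle=G_i$ with the same coloring, and exactly one edge (of arbitrary fixed color) between each $u\in V(G_1)$ and $w\in V(G_2)$; these latter edges are the exterior edges. For $v$ on an alternating cycle $C$, $v^r$ (resp. $v^b$) is the neighbor of $v$ on $C$ with $vv^r$ red (resp. $vv^b$ blue). For an exterior edge $vw$ with $v\in V(C_1)$, $w\in V(C_2)$: if $vw$ is red, $vw,v^rw^r$ is a good pair if $v^rw^r$ is red; if $vw$ is blue, $vw,v^bw^b$ is a good pair if $v^bw^b$ is blue. A vertex $v\in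 V(C_i)$ is red-singular (blue-singular) with respect to $C_{3-i}$ if all edges between $v$ and $V(C_{3-i})$ are red (blue); it is singular if red- or blue-singular, and non-singular otherwise (i.e. it is incident with exterior edges of both colors towards $C_{3-i}$). *)

From mathcomp Require Import all_boot.
Set Implicit Arguments. Unset Strict Implicit. Unset Printing Implicit Defensive.

(* A 2-edge-colored simple graph on a finite vertex type T is given by a
   symmetric irreflexive adjacency relation [adj] and a colouring [col]
   (col u v = true means the edge uv is red, false means blue); [col] is
   only meaningful on edges and is assumed symmetric. *)

(* [f : nat -> T] read modulo k describes the closed walk
   f 0, f 1, ..., f (k-1), f 0.  It is an alternating cycle when it has at
   least 3 distinct vertices, consecutive vertices are adjacent, and
   consecutive edges (cyclically) have different colours. *)
Definition is_alt_cycle (T : eqType) (adj : rel T) (col : T -> T -> bool)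
    (k : nat) (f : nat -> T) : Prop :=
  [/\ 3 <= k,
      (forall i j, i < k -> j < k -> f i = f j -> i = j),
      (forall i, adj (f (i %% k)) (f (i.+1 %% k))) &
      (forall i, col (f (i %% k)) (f (i.+1 %% k))
                 != col (f (i.+1 %% k)) (f (i.+2 %% k)))].

(* For the vertex v = f i on the alternating cycle f (of length k) and a
   colour c, [cnbr col k f i c] is v^c: the neighbour u of v on the cycle
   such that the cycle edge vu has colour c (successor or predecessor). *)
Definition cnbr (T : Type) (col : T -> T -> bool) (k : nat) (f : nat -> T)
    (i : nat) (c : bool) : T :=
  if col (f (i %% k)) (f (i.+1 %% k)) == c then f (i.+1 %% k)
  else f ((i + k).-1 %% k).

(* Good pair: for v = x i on C1 and w = y j on C2, the exterior edge vw of
   colour c together with v^c w^c forms a good pair iff v^c w^c has colour c. *)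
Definition good_pair (T : Type) (col : T -> T -> bool)
    (n2 : nat) (x : nat -> T) (m2 : nat) (y : nat -> T) (i j : nat) : bool :=
  let c := col (x i) (y j) in
  col (cnbr col n2 x i c) (cnbr col m2 y j c) == c.

Definition nonsingular (T : finType) (col : T -> T -> bool) (v : T)
    (W : {set T}) : Prop :=
  (exists2 w, w \in W & col v w) /\ (exists2 w, w \in W & ~~ col v w).

(* Index the exterior edges by the torus Z_2n x Z_2m, giving the cell (i, j)
   the colour of x_i y_j.  The absence of good pairs says that from every cell
   a diagonal step (+-1, +-1), dictated by the colours, leads to a cell of the
   opposite colour; the step direction is then preserved, so colours alternate
   along whole diagonals.  If x_0 lies on no alternating 4-cycle
   x_0 y_r y_(r+1) y_(r+2), the colour of x_0 y_r depends only on the parity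
   of r; walking along diagonals from row 0 every colour becomes a function of
   the parities of i and j, which forces every x_i or every y_j to be
   singular.  The second 4-cycle follows by exchanging the two cycles. *)

From mathcomp Require Import all_boot zify.
From Stdlib Require Import Classical.
Set Implicit Arguments. Unset Strict Implicit. Unset Printing Implicit Defensive.

Lemma alt_addn (A : nat -> bool) :
  (forall i, A i.+1 = ~~ A i) -> forall i k, A (i + k) = A i (+) odd k.
Proof.
move=> A_alt i; elim=> [|k IHk]; first by rewrite addn0 addbF.
by rewrite addnS A_alt IHk addbN.
Qed.

Definition pm1 (K : nat) (b : bool) : nat := if b then 1 else K.-1.

Lemma odd_pm1 n b : 0 < n -> odd (pm1 (2 * n) b).
Proof. by case: b => //= n_gt0; rewrite -subn1 oddB ?oddM // muln_gt0. Qed.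

Lemma pm1_sqr_mod K b i : 0 < K -> i * pm1 K b * pm1 K b = i %[mod K].
Proof.
case: b; first by rewrite !muln1.
case: K => [//|[_|k _]] /=; first by rewrite !modn1.
have -> : i * k.+1 * k.+1 = i * k * k.+2 + i by nia.
by rewrite modnMDl.
Qed.

Lemma cnbr_mod (T : Type) (col : T -> T -> bool) K (f : nat -> T) i c :
  0 < K ->
  cnbr col K f (i %% K) c
  = f ((i + pm1 K (col (f (i %% K)) (f (i.+1 %% K)) == c)) %% K).
Proof.
move=> K_gt0; rewrite /cnbr /pm1 modn_mod.
have -> : (i %% K).+1 %% K = i.+1 %% K by rewrite -addn1 modnDml addn1.
case: ifP => _; first by rewrite addn1.
by rewrite -{2}(prednK K_gt0) addnS /= modnDml.
Qed.

Lemma parity_of_step2_closed m (D : nat -> bool) : 0 < m ->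
  (forall r, D r = D (r %% (2 * m))) -> (forall r, D r -> D r.+2) ->
  forall r, D r = D (odd r).
Proof.
move=> m_gt0 D_mod D_step2.
have D_iter k r : D r -> D (r + 2 * k).
  elim: k r => [|k IHk] r Dr; first by rewrite addn0.
  by rewrite mulnS addnA addn2; apply/IHk/D_step2.
move=> r; have r_split := odd_double_half r; rewrite -muln2 in r_split.
apply/idP/idP => [/(D_iter (m.-1 * r./2))|/(D_iter r./2)]; last first.
  by rewrite mulnC r_split.
have -> : r + 2 * (m.-1 * r./2) = r./2 * (2 * m) + odd r by nia.
by rewrite D_mod modnMDl -D_mod.
Qed.

Section DiagonalWalk.

Variables (n m : nat) (E : nat -> nat -> bool) (A B : nat -> bool).
Hypotheses (n_gt0 : 0 < n) (m_gt0 : 0 < m).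
Hypothesis E_mod : forall i j, E i j = E (i %% (2 * n)) (j %% (2 * m)).
Hypothesis A_alt : forall i, A i.+1 = ~~ A i.
Hypothesis B_alt : forall j, B j.+1 = ~~ B j.
(* E i j models the colour of x_i y_j and A i, B j those of x_i x_(i+1),
   y_j y_(j+1); by cnbr_mod, E_flip is the absence of good pairs. *)
Hypothesis E_flip : forall i j,
  E (i + pm1 (2 * n) (A i == E i j)) (j + pm1 (2 * m) (B j == E i j)) = ~~ E i j.

Lemma diagonal_walk t i j :
  E (i + t * pm1 (2 * n) (A i == E i j)) (j + t * pm1 (2 * m) (B j == E i j))
  = E i j (+) odd t.
Proof.
elim: t i j => [|t IHt] i j; first by rewrite !mul0n !addn0 addbF.
set a := pm1 _ (A i == _); set b := pm1 _ (B j == _).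
have A_flip : A (i + a) = ~~ A i by rewrite alt_addn // odd_pm1 // addbT.
have B_flip : B (j + b) = ~~ B j by rewrite alt_addn // odd_pm1 // addbT.
have := IHt (i + a) (j + b); rewrite E_flip A_flip B_flip !eqb_negLR negbK.
by rewrite -/a -/b -!addnA -!mulSn => ->; rewrite /= addNb addbN.
Qed.

Section RowZeroParity.

Hypothesis row0_parity : forall k, E 0 k = E 0 (odd k).

Lemma parity_colouring i j : E i j = E 0 (odd (i + j)) (+) odd i.
Proof.
set p := odd (i + j); set c := E 0 p.
set a := pm1 (2 * n) (A 0 == c); set b := pm1 (2 * m) (B p == c).
(* walk from (0, k) for t = i * a steps: since a * a = 1 modulo 2n this
   lands in row i, and k is chosen so that it lands in column j *)
set t := i * a; set k := j + t * b * (2 * m).-1.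
have odd_t : odd t = odd i by rewrite oddM odd_pm1 // andbT.
have odd_k : odd k = p.
  have odd_b : odd b := odd_pm1 _ m_gt0.
  have odd_M1 : odd (2 * m).-1 := odd_pm1 false m_gt0.
  by rewrite /k oddD oddM (oddM t) odd_t odd_b odd_M1 !andbT /p oddD addbC.
have E0k : E 0 k = c by rewrite row0_parity odd_k.
have Bk : B k = B p.
  by rewrite (alt_addn B_alt 0 k) (alt_addn B_alt 0 p) odd_k oddb.
have := diagonal_walk t 0 k; rewrite E0k Bk -/a -/b add0n odd_t => <-.
rewrite E_mod [E (t * a) _]E_mod; congr E.
  by rewrite pm1_sqr_mod // muln_gt0.
have -> : k + t * b = t * b * (2 * m) + j.
  by rewrite /k -addnA addnC -mulnSr prednK // muln_gt0 m_gt0.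
by rewrite modnMDl.
Qed.

Lemma const_rows_or_cols :
  (forall i j1 j2, E i j1 = E i j2) \/ (forall j i1 i2, E i1 j = E i2 j).
Proof.
have [E01|E01] := eqVneq (E 0 true) (E 0 false).
  have E0c (b : bool) : E 0 b = E 0 false by case: b; rewrite ?E01.
  left=> i j1 j2; rewrite (parity_colouring i j1) (parity_colouring i j2).
  by rewrite (E0c (odd (i + j1))) E0c.
have E0b (b : bool) : E 0 b = E 0 false (+) b.
  by case: b; move: E01; case: (E 0 true); case: (E 0 false).
right=> j i1 i2; rewrite (parity_colouring i1 j) (parity_colouring i2 j).
rewrite (E0b (odd (i1 + j))) (E0b (odd (i2 + j))) !oddD.
by rewrite [odd i1 (+) _]addbC [odd i2 (+) _]addbC !addbA !addbK.
Qed.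

End RowZeroParity.

Lemma exists_alt_fan :
  (exists i j1 j2, E i j1 != E i j2) -> (exists j i1 i2, E i1 j != E i2 j) ->
  exists r, E 0 r = ~~ B r /\ E 0 r.+2 = B r.
Proof.
move=> [i [j1 [j2 row_ns]]] [j [i1 [i2 col_ns]]].
apply: not_all_not_ex => no_fan.
pose D r := B r (+) E 0 r.
have B_parity k : B k = B 0 (+) odd k := alt_addn B_alt 0 k.
have D_mod r : D r = D (r %% (2 * m)).
  by rewrite /D E_mod mod0n (B_parity r) (B_parity (r %% _)) odd_mod // oddM.
have D_step2 r : D r -> D r.+2.
  rewrite /D !B_alt negbK => /addbP E0r; apply/addbP.
  have [E0r2|] := eqVneq (E 0 r.+2) (B r); last by case: (B r); case: (E 0 _).
  by exfalso; apply: (no_fan r); rewrite -E0r E0r2.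
have row0_parity k : E 0 k = E 0 (odd k).
  have := parity_of_step2_closed m_gt0 D_mod D_step2 k.
  by rewrite /D (B_parity k) (B_parity (odd k)) oddb => /addbI.
case: (const_rows_or_cols row0_parity) => [rows|cols].
  by rewrite (rows i j1 j2) eqxx in row_ns.
by rewrite (cols j i1 i2) eqxx in col_ns.
Qed.

End DiagonalWalk.

Lemma alt_cycle4 (T : eqType) (adj : rel T) (col : T -> T -> bool) (a b c d : T) :
  uniq [:: a; b; c; d] ->
  adj a b -> adj b c -> adj c d -> adj d a ->
  col a b != col b c -> col b c != col c d ->
  col c d != col d a -> col d a != col a b ->
  is_alt_cycle adj col 4 (nth a [:: a; b; c; d]).
Proof.
move=> abcd_uniq ab bc cd da abc bcd cda dab; split=> // [i j i_lt4 j_lt4|i|i].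
- by move/eqP; rewrite nth_uniq // => /eqP.
- rewrite -[i.+1]addn1 -modnDml.
  by case: (i %% 4) (ltn_pmod i (isT : 0 < 4)) => [|[|[|[|]]]].
- rewrite -[i.+2]addn2 -[i.+1]addn1 -modnDml -(modnDml i 2).
  by case: (i %% 4) (ltn_pmod i (isT : 0 < 4)) => [|[|[|[|]]]].
Qed.

Section OneCycle.

Variables (T : finType) (adj : rel T) (col : T -> T -> bool).
Variables (K : nat) (y : nat -> T).
Hypotheses (adj_sym : symmetric adj) (col_sym : forall u v, col u v = col v u).
Hypothesis Cy : is_alt_cycle adj col K y.

Lemma alt_cycle_gt0 : 0 < K.
Proof. by case: Cy => K_gt2 _ _ _; apply: leq_trans K_gt2. Qed.

Lemma alt_cycle_alt i :
  col (y (i.+1 %% K)) (y (i.+2 %% K)) = ~~ col (y (i %% K)) (y (i.+1 %% K)).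
Proof. by case: Cy => _ _ _ /(_ i); rewrite negb_eqb => /addbP. Qed.

Lemma alt_cycle_uniq3 r : uniq [:: y (r %% K); y (r.+1 %% K); y (r.+2 %% K)].
Proof.
case: Cy => K_gt2 y_inj _ _.
have y_neq a b : a < b < K -> y ((r + a) %% K) != y ((r + b) %% K).
  move=> /andP[a_lt_b b_lt]; apply/eqP => /y_inj.
  rewrite !ltn_pmod ?(ltn_trans _ K_gt2) // => /(_ isT isT) /eqP.
  by rewrite eqn_modDl !modn_small ?(ltn_trans a_lt_b) // (ltn_eqF a_lt_b).
have K_gt1 : 1 < K := ltnW K_gt2.
have := y_neq 0 1 K_gt1; have := y_neq 0 2 K_gt2; have := y_neq 1 2 K_gt2.
rewrite addn0 addn1 addn2.
by rewrite /= !inE negb_or => -> -> ->.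
Qed.

Lemma alt_4cycle_of_fan v r :
  (forall j, j < K -> v != y j) -> (forall j, j < K -> adj v (y j)) ->
  col v (y (r %% K)) = ~~ col (y (r %% K)) (y (r.+1 %% K)) ->
  col v (y (r.+2 %% K)) = col (y (r %% K)) (y (r.+1 %% K)) ->
  is_alt_cycle adj col 4
    (nth v [:: v; y (r %% K); y (r.+1 %% K); y (r.+2 %% K)]).
Proof.
move=> v_out v_adj vr vr2.
have K_gt0 := alt_cycle_gt0.
have [_ _ y_adj _] := Cy.
have alt := alt_cycle_alt r.
apply: alt_cycle4.
- by rewrite cons_uniq alt_cycle_uniq3 andbT !inE !negb_or !v_out ?ltn_pmod.
- by rewrite v_adj ?ltn_pmod.
- exact: y_adj r.
- exact: y_adj r.+1.
- by rewrite adj_sym v_adj ?ltn_pmod.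
- by rewrite vr; case: col.
- by rewrite alt; case: col.
- by rewrite [col _ v]col_sym vr2 alt; case: col.
- by rewrite [col _ v]col_sym vr2 vr; case: col.
Qed.

End OneCycle.

Lemma nonsingular_mod (T : finType) (col : T -> T -> bool) K (f : nat -> T) v :
  nonsingular col v [set f (val j) | j : 'I_K] ->
  exists j1 j2, col v (f (j1 %% K)) != col v (f (j2 %% K)).
Proof.
case=> [[_ /imsetP[j1 _ ->] v_j1] [_ /imsetP[j2 _ ->] v_j2]].
by exists j1, j2; rewrite !modn_small // v_j1 (negbTE v_j2).
Qed.

Section TwoCycles.

Variables (T : finType) (adj : rel T) (col : T -> T -> bool).
Variables (n m : nat) (x y : nat -> T).
Hypotheses (adj_sym : symmetric adj) (col_sym : forall u v, col u v = col v u).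
Hypothesis Cx : is_alt_cycle adj col (2 * n) x.
Hypothesis Cy : is_alt_cycle adj col (2 * m) y.
Local Notation V1 := [set x (val i) | i : 'I_(2 * n)].
Local Notation V2 := [set y (val j) | j : 'I_(2 * m)].
Hypothesis V12_disj : [disjoint V1 & V2].
Hypothesis V12_adj : forall u w, u \in V1 -> w \in V2 -> adj u w.
Hypothesis no_good_pair :
  forall i j, i < 2 * n -> j < 2 * m -> ~~ good_pair col (2 * n) x (2 * m) y i j.

Lemma alt_4cycle_at_x0 :
  (exists2 i, i < 2 * n & nonsingular col (x i) V2) ->
  (exists2 j, j < 2 * m & nonsingular col (y j) V1) ->
  exists r, r < 2 * m /\ is_alt_cycle adj col 4
    (fun k => nth (x 0) [:: x 0; y r; y (r.+1 %% (2 * m)); y (r.+2 %% (2 * m))] k).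
Proof.
move=> [i i_lt x_ns] [j j_lt y_ns].
have N_gt0 := alt_cycle_gt0 Cx; have M_gt0 := alt_cycle_gt0 Cy.
have n_gt0 : 0 < n by rewrite muln_gt0 in N_gt0.
have m_gt0 : 0 < m by rewrite muln_gt0 in M_gt0.
pose E i j := col (x (i %% (2 * n))) (y (j %% (2 * m))).
pose A i := col (x (i %% (2 * n))) (x (i.+1 %% (2 * n))).
pose B j := col (y (j %% (2 * m))) (y (j.+1 %% (2 * m))).
have E_mod i' j' : E i' j' = E (i' %% (2 * n)) (j' %% (2 * m)).
  by rewrite /E !modn_mod.
have E_flip i' j' :
    E (i' + pm1 (2 * n) (A i' == E i' j')) (j' + pm1 (2 * m) (B j' == E i' j'))
    = ~~ E i' j'.
  have := no_good_pair (ltn_pmod i' N_gt0) (ltn_pmod j' M_gt0).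
  by rewrite /good_pair !cnbr_mod // negb_eqb addbC => /addbP/esym.
have row_ns : exists i j1 j2, E i j1 != E i j2.
  have [j1 [j2 x_j12]] := nonsingular_mod x_ns.
  by exists i, j1, j2; rewrite /E (modn_small i_lt).
have col_ns : exists j i1 i2, E i1 j != E i2 j.
  have [i1 [i2 y_i12]] := nonsingular_mod y_ns.
  by exists j, i1, i2; rewrite /E (modn_small j_lt) !(col_sym (x _)).
have [r [E0r E0r2]] := exists_alt_fan n_gt0 m_gt0 E_mod
  (alt_cycle_alt Cx) (alt_cycle_alt Cy) E_flip row_ns col_ns.
move: E0r E0r2; rewrite /E /B mod0n => E0r E0r2.
have x0_V1 : x 0 \in V1 by apply/imsetP; exists (Ordinal N_gt0).
have y_V2 k : k < 2 * m -> y k \in V2.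
  by move=> k_lt; apply/imsetP; exists (Ordinal k_lt).
exists (r %% (2 * m)); split; first exact: ltn_pmod.
rewrite -[(r %% _).+2]addn2 -[(r %% _).+1]addn1 !modnDml addn1 addn2.
apply: (alt_4cycle_of_fan adj_sym col_sym Cy) => // k k_lt.
- by apply: contraFneq (disjointFr V12_disj x0_V1) => ->; apply: y_V2.
- exact: V12_adj x0_V1 (y_V2 k k_lt).
Qed.

End TwoCycles.

Lemma good_pair_sym (T : Type) (col : T -> T -> bool) N M (x y : nat -> T) i j :
  (forall u v, col u v = col v u) ->
  good_pair col M y N x j i = good_pair col N x M y i j.
Proof.
move=> col_sym; rewrite /good_pair /=.
by rewrite [col (y j) _]col_sym [col (cnbr _ M _ _ _) _]col_sym.
Qed.

Theorem lemma3p9 (T : finType) (adj : rel T) (col : T -> T -> bool)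
    (n m : nat) (x y : nat -> T) :
  (* G is a simple 2-edge-colored graph *)
  irreflexive adj -> symmetric adj -> (forall u v, col u v = col v u) ->
  (* C1 = x_0 ... x_{2n-1} x_0 and C2 = y_0 ... y_{2m-1} y_0 are alternating
     cycles, Hamiltonian in G1 = G<V1>, G2 = G<V2> respectively *)
  is_alt_cycle adj col (2 * n) x ->
  is_alt_cycle adj col (2 * m) y ->
  let V1 := [set x (val i) | i : 'I_(2 * n)] in
  let V2 := [set y (val j) | j : 'I_(2 * m)] in
  (* G in G1 (+) G2 *)
  [disjoint V1 & V2] -> V1 :|: V2 = [set: T] ->
  (forall u w, u \in V1 -> w \in V2 -> adj u w) ->
  (* no good pair *)
  (forall i j, i < 2 * n -> j < 2 * m -> ~~ good_pair col (2 * n) x (2 * m) y i j) ->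
  (* non-singular vertices on both sides *)
  (exists2 i, i < 2 * n & nonsingular col (x i) V2) ->
  (exists2 j, j < 2 * m & nonsingular col (y j) V1) ->
  exists r s, [/\ r < 2 * m, s < 2 * n,
    is_alt_cycle adj col 4
      (fun k => nth (x 0) [:: x 0; y r; y (r.+1 %% (2 * m)); y (r.+2 %% (2 * m))] k) &
    is_alt_cycle adj col 4
      (fun k => nth (y 0) [:: y 0; x s; x (s.+1 %% (2 * n)); x (s.+2 %% (2 * n))] k)].
Proof.
move=> _ adj_sym col_sym Cx Cy V1 V2 V12_disj _ V12_adj no_good x_ns y_ns.
have [r [r_lt Cr]] :=
  alt_4cycle_at_x0 adj_sym col_sym Cx Cy V12_disj V12_adj no_good x_ns y_ns.
have [s [s_lt Cs]] : exists s, s < 2 * n /\ is_alt_cycle adj col 4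
    (fun k => nth (y 0) [:: y 0; x s; x (s.+1 %% (2 * n)); x (s.+2 %% (2 * n))] k).
  apply: (alt_4cycle_at_x0 adj_sym col_sym Cy Cx) => //.
  - by rewrite disjoint_sym.
  - by move=> w u w_V2 u_V1; rewrite adj_sym V12_adj.
  - by move=> j i j_lt i_lt; rewrite good_pair_sym // no_good.
by exists r, s.
Qed.
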